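(* Up to homeomorphism, the Sorgenfrey line is the unique Hausdorff topological space that has a Sorgenfrey base which is locally strict and has strict branches.
   Context: The Sorgenfrey line is $\mathbb R$ with the topology generated by $\{[a,b)\}$. Notation: ${}^{<\omega}\omega$, ${}^\omega\omega$ finite/infinite sequences of naturals; $a^\frown k$ extends $a$ by $k$; $a\triangleleft b$ iff there is $n$ in both domains with $a\upharpoonright n=b\upharpoonright n$ and $a(n)<b(n)$. A Souslin scheme on $X$ is a family $\mathbf V=\langle V_a\rangle_{a\in{}^{<\omega}\omega}$ of subsets of $X$; $\mathrm{fruit}(\mathbf V,p)=\bigcap_nV_{p\upharpoonright n}$; covering: $V_{\langle\rangle}=X$ and $V_a=\bigcup_nV_{a^\frown n}$; complete: all fruits nonempty; open: all $V_a$ open; has strict branches: every fruit is a singleton; locally strict: $V_a=\bigcup_nV_{a^\frown n}$ and $V_{a^\frown m}\cap V_{a^\frown k}=\emptyset$ for all $a$ and $m\ne k$. $\mathrm{branches}(\mathbf V,x)=\{q: x\in\mathrm{fruit}(\mathbf V,q)\}$; $\mathrm{rsequences}(q,n)=\{p:q\triangleleft p,\ q\upharpoonright n=p\upharpoonright n\}$; $\mathrm{cut}(\mathbf V,q,n)=\bigcup\{\mathrm{fruit}(\mathbf V,p):p\in\mathrm{rsequences}(q,n)\}$. A branch $q$ of $x$ is a $\tau$-base branch of $x$ if $\{\mathrm{cut}(\mathbf V,q,m)\cup\{x\}:m\in\omega\}$ is an open neighborhood base at $x$; $\mathrm{BB}(\mathbf V,x,\tau)$ is the set of these. A Sorgenfrey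 base for a Hausdorff $\langle X,\tau\rangle$ is an open complete covering Souslin scheme with (S1) for all $x$, $q\in\mathrm{branches}(\mathbf V,x)$, $n$, some $t\in\mathrm{BB}(\mathbf V,x,\tau)$ has $t\upharpoonright n=q\upharpoonright n$; (S2) every $q\in{}^\omega\omega$ lies in $\mathrm{BB}(\mathbf V,z,\tau)$ for some $z$. *)

From mathcomp Require Import all_boot all_order all_algebra.
From mathcomp Require Import all_classical all_reals all_analysis.
Set Implicit Arguments. Unset Strict Implicit. Unset Printing Implicit Defensive.
Import Order.TTheory GRing.Theory Num.Theory.
Local Open Scope classical_set_scope.
Local Open Scope ring_scope.

(* Finite sequences of naturals: seq nat; infinite ones: nat -> nat.
   The restriction p|n of an infinite sequence is mkseq p n;
   a^k is rcons a k. *)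

Section Souslin.
Variable X : topologicalType.

Definition fruit (V : seq nat -> set X) (p : nat -> nat) : set X :=
  [set x | forall n : nat, V (mkseq p n) x].

Definition scheme_covering (V : seq nat -> set X) : Prop :=
  V [::] = setT /\ forall a : seq nat, V a = \bigcup_(n in [set: nat]) V (rcons a n).

Definition scheme_complete (V : seq nat -> set X) : Prop :=
  forall p : nat -> nat, fruit V p !=set0.

Definition scheme_open (V : seq nat -> set X) : Prop :=
  forall a : seq nat, open (V a).

Definition strict_branches (V : seq nat -> set X) : Prop :=
  forall p : nat -> nat, exists x : X, fruit V p = [set x].

Definition locally_strict (V : seq nat -> set X) : Prop :=
  (forall a : seq nat, V a = \bigcup_(n in [set: nat]) V (rcons a n)) /\
  (forall (a : seq nat) (m k : nat), m <> k -> V (rcons a m) `&` V (rcons a k) = set0).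

Definition seq_tri (a b : nat -> nat) : Prop :=
  exists n : nat, (forall i : nat, (i < n)%N -> a i = b i) /\ (a n < b n)%N.

Definition branches (V : seq nat -> set X) (x : X) : set (nat -> nat) :=
  [set q | fruit V q x].

Definition rsequences (q : nat -> nat) (n : nat) : set (nat -> nat) :=
  [set p | seq_tri q p /\ mkseq q n = mkseq p n].

Definition cut (V : seq nat -> set X) (q : nat -> nat) (n : nat) : set X :=
  \bigcup_(p in rsequences q n) fruit V p.

Definition BB (V : seq nat -> set X) (x : X) : set (nat -> nat) :=
  [set q | branches V x q /\
     (forall m : nat, open (cut V q m `|` [set x])) /\
     (forall U : set X, open U -> U x ->
        exists m : nat, cut V q m `|` [set x] `<=` U)].

Definition sorgenfrey_base (V : seq nat -> set X) : Prop :=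
  [/\ scheme_open V, scheme_complete V, scheme_covering V,
      (forall (x : X) (q : nat -> nat) (n : nat), branches V x q ->
         exists t : nat -> nat, BB V x t /\ mkseq t n = mkseq q n) &
      (forall q : nat -> nat, exists z : X, BB V z q)].

End Souslin.

Definition sorgenfrey_open (R : realType) (A : set R) : Prop :=
  forall x : R, A x -> exists y : R, x < y /\ [set z | x <= z < y] `<=` A.

Definition homeomorphic_to_sorgenfrey (R : realType) (X : topologicalType) : Prop :=
  exists f : X -> R, bijective f /\
    forall A : set X, open A <-> sorgenfrey_open (f @` A).

From Pilot Require Import Defs.
From mathcomp Require Import all_boot all_order all_algebra.
From mathcomp Require Import all_classical all_reals all_analysis.
From mathcomp Require Import lra zify.
Import Order.TTheory GRing.Theory Num.Theory.
Import numFieldNormedType.Exports.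
Set Implicit Arguments. Unset Strict Implicit.
Local Open Scope classical_set_scope.
Local Open Scope ring_scope.

(* The proof compares X with one canonical scheme [Iv] on the reals.  The
   first-level sets of [Iv] are the unit intervals [z, z+1), z : int, and each
   interval [a, b) is split into the consecutive intervals
   [b - (b-a)/(k+1), b - (b-a)/(k+2)), k : nat, accumulating at b.  This scheme
   is locally strict and covering, its sets are Sorgenfrey-open, and each
   branch p shrinks to a single point [code p]; [code] is a bijection, strictly
   increasing for the lexicographic order, and the cuts of a branch q are exactly
   the Sorgenfrey neighbourhoods [code q, h) of [code q].

   Both directions of the theorem follow. *)

Lemma mkseq_eqP (p q : nat -> nat) n :
  mkseq p n = mkseq q n <-> forall i, (i < n)%N -> p i = q i.
Proof.
split.
- by move=> E i Hi; have := congr1 (fun s => nth 0%N s i) E; rewrite !nth_mkseq.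
- move=> H; apply: (@eq_from_nth _ 0%N); first by rewrite !size_mkseq.
  by move=> i; rewrite size_mkseq => Hi; rewrite !nth_mkseq // H.
Qed.

Lemma first_difference (p q : nat -> nat) : p <> q ->
  exists d, (forall i, (i < d)%N -> q i = p i) /\ p d <> q d.
Proof.
move=> ne; have ex : exists d, p d != q d.
  apply: contra_notP ne => h; apply: funext => i.
  by apply/eqP; apply: contra_notT h => hi; exists i.
case: (ex_minnP ex) => d /eqP Hd Hmin; exists d; split => // i id.
apply/esym/eqP; apply: contraTT id => hi; rewrite -leqNgt; exact: Hmin.
Qed.

Lemma prefix_depth (q p : nat -> nat) m d :
  mkseq q m = mkseq p m -> (q d < p d)%N -> (m <= d)%N.
Proof.
move=> /mkseq_eqP E lt; rewrite leqNgt; apply/negP => dm.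
by rewrite (E d dm) ltnn in lt.
Qed.

Section CoveringScheme.
Variables (T : topologicalType) (W : seq nat -> set T).
Hypothesis W_root : W [::] = setT.
Hypothesis W_cover : forall a, W a = \bigcup_(n in [set: nat]) W (rcons a n).
Hypothesis W_disj : forall a m k, m <> k -> W (rcons a m) `&` W (rcons a k) = set0.

Lemma scheme_nested a k : W (rcons a k) `<=` W a.
Proof. by move=> x Hx; rewrite W_cover; exists k. Qed.

(* Following at each level a child containing x builds a branch of x. *)
Lemma branch_exists x : exists p, fruit W p x.
Proof.
have : forall a, exists k, W a x -> W (rcons a k) x.
  move=> a; case: (pselect (W a x)) => [|nWa]; last by exists 0%N => /nWa.
  by rewrite {1}W_cover => -[k _ Hk]; exists k.
move=> /boolp.choice [next Hnext].
pose s := fix s n := if n is n'.+1 then rcons (s n') (next (s n')) else [::].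
have mkseq_s : forall n, mkseq (fun n => next (s n)) n = s n.
  by elim=> [|n IH] //; rewrite mkseqS IH.
exists (fun n => next (s n)) => n; rewrite mkseq_s.
by elim: n => [|n IH] /=; [rewrite W_root | exact: Hnext].
Qed.

Lemma prefix_unique p q n y :
  W (mkseq p n) y -> W (mkseq q n) y -> mkseq p n = mkseq q n.
Proof.
elim: n => [|n IH] // Hp Hq; rewrite !mkseqS in Hp Hq *.
have E := IH (scheme_nested Hp) (scheme_nested Hq).
rewrite E in Hp *; congr rcons.
case: (pselect (p n = q n)) => // ne.
have : (W (rcons (mkseq q n) (p n)) `&` W (rcons (mkseq q n) (q n))) y by [].
by rewrite W_disj.
Qed.

Lemma branch_unique p q y : fruit W p y -> fruit W q y -> p = q.
Proof.
move=> Hp Hq; apply: funext => i.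
by have /mkseq_eqP := prefix_unique (Hp i.+1) (Hq i.+1); apply.
Qed.

Lemma scheme_memberE p x a : fruit W p x -> W a x <-> a = mkseq p (size a).
Proof.
move=> Hp; have Ea : a = mkseq (nth 0%N a) (size a) by rewrite mkseq_nth.
split => [Hx|->]; last exact: Hp.
by rewrite {1}Ea; apply: prefix_unique (Hp _); rewrite -Ea.
Qed.

Lemma branch_coding : strict_branches W ->
  exists br : T -> nat -> nat, (forall x, fruit W (br x) x) /\ bijective br.
Proof.
move=> W_strict.
have [br Hbr] := boolp.choice branch_exists.
have [pt Hpt] := boolp.choice W_strict.
exists br; split => //; exists pt => [x|p].
- by have := Hbr x; rewrite Hpt => /= E; rewrite -E.
- by apply: (branch_unique (Hbr (pt p))); rewrite Hpt.
Qed.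
End CoveringScheme.

Section RealScheme.
Context {R : realType}.

Definition nat_to_int (k : nat) : int := if odd k then Negz k./2 else Posz k./2.

Lemma nat_to_int_surj (z : int) : exists k, nat_to_int k = z.
Proof.
case: z => n.
- by exists n.*2; rewrite /nat_to_int odd_double doubleK.
- by exists n.*2.+1; rewrite /nat_to_int /= odd_double /= uphalf_double.
Qed.

Lemma nat_to_int_inj : injective nat_to_int.
Proof.
move=> j k; rewrite /nat_to_int.
case: (boolP (odd j)) => oj; case: (boolP (odd k)) => ok //= [] E.
- by rewrite -(odd_double_half j) -(odd_double_half k) oj ok E.
- by rewrite -(odd_double_half j) -(odd_double_half k) (negbTE oj) (negbTE ok) E.
Qed.

Lemma div_nat_le (d : R) m n :
  0 < d -> (0 < m)%N -> (m <= n)%N -> d / n%:R <= d / m%:R.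
Proof.
move=> d0 m0 mn; rewrite ler_pM2l // lef_pV2 ?ler_nat // posrE ltr0n //.
exact: leq_trans mn.
Qed.

Lemma div_nat_lt (d : R) m n :
  0 < d -> (0 < m)%N -> (m < n)%N -> d / n%:R < d / m%:R.
Proof.
move=> d0 m0 mn; rewrite ltr_pM2l // ltf_pV2 ?ltr_nat // posrE ltr0n //.
exact: ltn_trans mn.
Qed.

Lemma div_nat_gt0 (d : R) m : 0 < d -> (0 < m)%N -> 0 < d / m%:R.
Proof. by move=> d0 m0; rewrite divr_gt0 // ltr0n. Qed.

Definition piece (ab : R * R) (k : nat) : R * R :=
  (ab.2 - (ab.2 - ab.1) / k.+1%:R, ab.2 - (ab.2 - ab.1) / k.+2%:R).

Section Piece.
Variables a b : R.
Hypothesis ab : a < b.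
Let d := b - a.
Let d0 : 0 < d. Proof. by rewrite subr_gt0. Qed.

Lemma piece_lt k : (piece (a, b) k).1 < (piece (a, b) k).2.
Proof. by rewrite /piece /= ltrD2l ltrN2; exact: div_nat_lt. Qed.

Lemma piece_ge k : a <= (piece (a, b) k).1.
Proof.
rewrite /piece /=; have := div_nat_le (m := 1) (n := k.+1) d0 isT isT.
rewrite divr1 /d; generalize ((b - a) / k.+1%:R) => t; lra.
Qed.

Lemma piece_hi k : (piece (a, b) k).2 < b.
Proof.
rewrite /piece /=; have := div_nat_gt0 (m := k.+2) d0 isT.
rewrite /d; generalize ((b - a) / k.+2%:R) => t; lra.
Qed.

Lemma piece_len k : (piece (a, b) k).2 - (piece (a, b) k).1 <= (b - a) / 2.
Proof.
rewrite /piece /=; have h2 := div_nat_gt0 (m := k.+2) d0 isT.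
case: k h2 => [|k] h2.
- rewrite divr1 /=; move: h2; rewrite /d.
  have : (b - a) / 2 * 2 = b - a by rewrite mulrVK // unitfE.
  generalize ((b - a) / 2) => t; lra.
- have := div_nat_le (m := 2) (n := k.+2) d0 isT isT; move: h2; rewrite /d.
  generalize ((b - a) / k.+3%:R) ((b - a) / k.+2%:R) ((b - a) / 2%:R) => t u v; lra.
Qed.

Lemma piece_ord j k : (j < k)%N -> (piece (a, b) j).2 <= (piece (a, b) k).1.
Proof. by move=> jk; rewrite /piece /= -/d lerD2l lerN2; exact: div_nat_le. Qed.

Lemma piece_cover y : a <= y < b ->
  exists k, (piece (a, b) k).1 <= y < (piece (a, b) k).2.
Proof.
move=> /andP[ay yb].
have by0 : 0 < b - y by rewrite subr_gt0.
set r := d / (b - y).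
have r1 : 1 <= r by rewrite /r ler_pdivlMr // mul1r /d; lra.
have r0 : 0 <= r by lra.
have /andP[t1 t2] := truncn_itv r0.
have tpos : (0 < Num.truncn r)%N by rewrite truncn_gt_nat.
exists (Num.truncn r).-1; rewrite /piece /= -/d prednK //; apply/andP; split.
- suff : d / (Num.truncn r)%:R >= b - y.
    by rewrite /d; generalize ((b - a) / (Num.truncn r)%:R) => t; lra.
  by rewrite ler_pdivlMr ?ltr0n // mulrC -ler_pdivlMr.
- suff : d / (Num.truncn r).+1%:R < b - y.
    by rewrite /d; generalize ((b - a) / (Num.truncn r).+1%:R) => t; lra.
  by rewrite ltr_pdivrMr ?ltr0n // mulrC -ltr_pdivrMr.
Qed.
End Piece.

Definition intv (a : seq nat) : R * R :=
  if a is k :: s then foldl piece ((nat_to_int k)%:~R, (nat_to_int k)%:~R + 1) s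
  else (0, 1).
Definition lo a := (intv a).1.
Definition hi a := (intv a).2.
Definition Iv (a : seq nat) : set R :=
  if a is [::] then setT else [set y | lo a <= y < hi a].

Lemma Iv_root : Iv [::] = setT.
Proof. by []. Qed.

Lemma Iv_nonroot a : a <> [::] -> Iv a = [set y | lo a <= y < hi a].
Proof. by case: a. Qed.

Lemma Iv_rcons_eq a k y :
  Iv (rcons a k) y = (lo (rcons a k) <= y < hi (rcons a k)).
Proof. by case: a. Qed.

Lemma intv_rcons a k : a <> [::] -> intv (rcons a k) = piece (lo a, hi a) k.
Proof.
by rewrite /lo /hi; case: a => // k0 s _; rewrite /= foldl_rcons; case: foldl.
Qed.

Lemma lo_lt_hi a : lo a < hi a.
Proof.
elim/last_ind: a => [|a k IH]; first by rewrite /lo /hi /= ltr01.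
case: (pselect (a = [::])) => [->|na]; first by rewrite /lo /hi /= ltrDl ltr01.
by rewrite /lo /hi intv_rcons //; apply: piece_lt.
Qed.

Lemma lo_rcons a k : a <> [::] -> lo a <= lo (rcons a k).
Proof. by move=> na; rewrite {2}/lo intv_rcons //; apply/piece_ge/lo_lt_hi. Qed.

Lemma hi_rcons a k : a <> [::] -> hi (rcons a k) < hi a.
Proof. by move=> na; rewrite {1}/hi intv_rcons //; apply/piece_hi/lo_lt_hi. Qed.

Lemma Iv_length a : a <> [::] -> hi a - lo a <= (size a)%:R^-1.
Proof.
elim/last_ind: a => [//|a k IH] _.
case: (pselect (a = [::])) => [->|na].
  by rewrite /lo /hi /= invr1 addrAC subrr add0r.
have s1 : (0 < size a)%N by case: a na {IH}.
apply: (le_trans (y := (hi a - lo a) / 2)).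
  by rewrite /hi /lo intv_rcons //; apply/piece_len/lo_lt_hi.
apply: (le_trans (y := (size a)%:R^-1 / 2)); first by rewrite ler_pM2r // IH.
rewrite size_rcons -invfM -natrM lef_pV2 ?posrE ?ltr0n ?muln_gt0 ?s1 // ler_nat.
by rewrite muln2 -addnn -{1}[size a]addn0 ltn_add2l.
Qed.

Lemma Iv_nest a k : Iv (rcons a k) `<=` Iv a.
Proof.
case: (pselect (a = [::])) => [->//|na] y.
rewrite Iv_rcons_eq Iv_nonroot // => /andP[y1 y2]; apply/andP; split.
- exact: le_trans (lo_rcons k na) y1.
- exact: lt_trans y2 (hi_rcons k na).
Qed.

Lemma Iv_cover a y : Iv a y -> exists k, Iv (rcons a k) y.
Proof.
case: (pselect (a = [::])) => [->|na] Hy.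
- have [k Hk] := nat_to_int_surj (Num.floor y).
  exists k; rewrite Iv_rcons_eq /lo /hi /= Hk -intrD1; exact: floor_itv.
- have [k Hk] : exists k, (piece (lo a, hi a) k).1 <= y < (piece (lo a, hi a) k).2.
    by apply: piece_cover; move: Hy; rewrite Iv_nonroot.
  by exists k; rewrite Iv_rcons_eq /lo /hi intv_rcons.
Qed.

Lemma Iv_sibling_lt a j k y z : a <> [::] -> (j < k)%N ->
  Iv (rcons a j) y -> Iv (rcons a k) z -> y < z.
Proof.
move=> na jk; rewrite !Iv_rcons_eq /lo /hi !intv_rcons //.
move=> /andP[_ yj] /andP[kz _].
by apply: (lt_le_trans yj); apply: le_trans kz; apply/piece_ord/jk/lo_lt_hi.
Qed.

Lemma Iv_disj a m k : m <> k -> Iv (rcons a m) `&` Iv (rcons a k) = set0.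
Proof.
move=> mk; apply/seteqP; split=> [y [H1 H2]|//].
case: (pselect (a = [::])) => [E|na].
- move: H1 H2; rewrite E !Iv_rcons_eq /lo /hi /= => /andP[u1 v1] /andP[u2 v2].
  have : nat_to_int m <> nat_to_int k by move/nat_to_int_inj.
  have : ((nat_to_int m)%:~R : R) < (nat_to_int k + 1)%:~R.
    by rewrite intrD; exact: le_lt_trans v2.
  have : ((nat_to_int k)%:~R : R) < (nat_to_int m + 1)%:~R.
    by rewrite intrD; exact: le_lt_trans v1.
  rewrite !ltr_int; generalize (nat_to_int m) (nat_to_int k) => u v; lia.
- case: (ltngtP m k) => h //.
  + by have := Iv_sibling_lt na h H1 H2; rewrite ltxx.
  + by have := Iv_sibling_lt na h H2 H1; rewrite ltxx.
Qed.

Lemma Iv_cov_eq a : Iv a = \bigcup_(n in [set: nat]) Iv (rcons a n).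
Proof.
apply/seteqP; split=> y; first by move=> /Iv_cover [k Hk]; exists k.
by move=> [k _]; apply: Iv_nest.
Qed.

Lemma Iv_sopen a : sorgenfrey_open (Iv a).
Proof.
case: a => [|k s]; first by move=> x _; exists (x + 1); split; [lra|].
move=> x /andP[x1 x2]; exists (hi (k :: s)); split => // z /andP[z1 z2].
by rewrite /= z2 andbT; exact: le_trans z1.
Qed.

Definition branch_lo (p : nat -> nat) n := lo (mkseq p n.+1).
Definition branch_hi (p : nat -> nat) n := hi (mkseq p n.+1).

Lemma mkseqS_neq0 (p : nat -> nat) n : mkseq p n.+1 <> [::].
Proof. by rewrite mkseqS => /(congr1 size); rewrite size_rcons. Qed.

Lemma Iv_branchE p n y :
  Iv (mkseq p n.+1) y = (branch_lo p n <= y < branch_hi p n).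
Proof. by rewrite /branch_lo /branch_hi mkseqS Iv_rcons_eq. Qed.

Lemma branch_lo_mono p i d : branch_lo p i <= branch_lo p (i + d).
Proof.
elim: d => [|d IH]; first by rewrite addn0.
apply: (le_trans IH); rewrite addnS /branch_lo [mkseq p (i + d).+2]mkseqS.
exact/lo_rcons/mkseqS_neq0.
Qed.

Lemma branch_hi_mono p i d : branch_hi p (i + d) <= branch_hi p i.
Proof.
elim: d => [|d IH]; first by rewrite addn0.
apply: le_trans IH; rewrite addnS /branch_hi [mkseq p (i + d).+2]mkseqS.
exact/ltW/hi_rcons/mkseqS_neq0.
Qed.

Lemma branch_lo_lt_hi p i j : branch_lo p i < branch_hi p j.
Proof.
have Hi := branch_lo_mono p i (maxn i j - i).
have Hj := branch_hi_mono p j (maxn i j - j).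
rewrite subnKC ?leq_maxl // in Hi; rewrite subnKC ?leq_maxr // in Hj.
by apply: (le_lt_trans Hi); apply: (lt_le_trans _ Hj); exact: lo_lt_hi.
Qed.

Lemma branch_len p n : branch_hi p n - branch_lo p n <= n.+1%:R^-1.
Proof. by have := Iv_length (@mkseqS_neq0 p n); rewrite size_mkseq. Qed.

Definition code (p : nat -> nat) : R := sup (range (branch_lo p)).

Lemma code_ge p n : branch_lo p n <= code p.
Proof.
apply: sup_upper_bound; last by exists n.
split; first by exists (branch_lo p 0), 0%N.
by exists (branch_hi p 0) => x [i _ <-]; exact/ltW/branch_lo_lt_hi.
Qed.

Lemma code_in p n : Iv (mkseq p n) (code p).
Proof.
case: n => [//|n]; rewrite Iv_branchE code_ge /=.
have : code p <= branch_hi p n.+1.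
  apply: ge_sup; first by exists (branch_lo p 0), 0%N.
  by move=> x [i _ <-]; exact/ltW/branch_lo_lt_hi.
move/le_lt_trans; apply.
by rewrite /branch_hi [mkseq p n.+2]mkseqS; exact/hi_rcons/mkseqS_neq0.
Qed.

Lemma code_lt_branch_hi p n : code p < branch_hi p n.
Proof. by have := code_in p n.+1; rewrite Iv_branchE => /andP[]. Qed.

(* Iv has strict branches, since the intervals along p shrink to length 0. *)
Lemma fruit_Iv p : fruit Iv p = [set code p].
Proof.
apply/seteqP; split => y; last by move=> ->; exact: code_in.
have close : forall u v : R, fruit Iv p u -> fruit Iv p v -> ~ u < v.
  move=> u v Hu Hv uv; have [k Hk] := ltr_add_invr uv.
  have := Hu k.+1; have := Hv k.+1; rewrite !Iv_branchE => /andP[_ v2] /andP[u1 _].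
  have := branch_len p k.
  set t := (k.+1%:R^-1 : R) in Hk *; clearbody t; lra.
move=> Hy; have Hc : fruit Iv p (code p) by move=> n; exact: code_in.
by case: (ltgtP y (code p)) => // [/(close _ _ Hy Hc)|/(close _ _ Hc Hy)].
Qed.

Lemma fruit_Iv_eq p y : fruit Iv p y -> y = code p.
Proof. by rewrite fruit_Iv. Qed.

Lemma code_bij : bijective code.
Proof.
have [br Hbr] := boolp.choice (branch_exists Iv_root Iv_cov_eq).
exists br => [p|y]; last by rewrite -(fruit_Iv_eq (Hbr y)).
by apply: (branch_unique Iv_cov_eq Iv_disj (Hbr (code p))); rewrite fruit_Iv.
Qed.

Lemma code_lt p q d : (0 < d)%N -> (forall i, (i < d)%N -> p i = q i) ->
  (p d < q d)%N -> code p < code q.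
Proof.
move=> d0 E lt; have Ea : mkseq p d = mkseq q d by apply/mkseq_eqP.
have na : mkseq p d <> [::] by case: d d0 {E lt Ea} => // d _; exact: mkseqS_neq0.
have Hp := code_in p d.+1; have Hq := code_in q d.+1.
rewrite mkseqS in Hp; rewrite mkseqS -Ea in Hq.
exact: (Iv_sibling_lt na lt Hp Hq).
Qed.

Lemma cut_IvE q m z :
  Defs.cut Iv q m z <-> exists2 p, rsequences q m p & z = code p.
Proof.
split; first by move=> [p Hp /fruit_Iv_eq ->]; exists p.
by move=> [p Hp ->]; exists p => //; rewrite fruit_Iv.
Qed.

Lemma cut_Iv_sub q m z : Defs.cut Iv q m.+1 z -> code q < z < branch_hi q m.
Proof.
move=> /cut_IvE [p [[d [E1 E2]] E3] ->].
have dm := prefix_depth E3 E2.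
rewrite (code_lt (leq_trans (ltn0Sn m) dm) E1 E2) /=.
by have := code_in p m.+1; rewrite -E3 Iv_branchE => /andP[].
Qed.

Lemma cut_Iv_intv q m z :
  code q <= z < branch_hi q m -> z <> code q -> Defs.cut Iv q m z.
Proof.
move=> /andP[z1 z2] nz.
have [p Hp] := branch_exists Iv_root Iv_cov_eq z.
have Ez := fruit_Iv_eq Hp.
have Iq : Iv (mkseq q m.+1) z.
  by rewrite Iv_branchE z2 andbT; exact: le_trans (code_ge q m) z1.
have /mkseq_eqP Es := prefix_unique Iv_cov_eq Iv_disj (Hp m.+1) Iq.
have [d [Ed Nd]] : exists d, (forall i, (i < d)%N -> q i = p i) /\ p d <> q d.
  by apply: first_difference => epq; apply: nz; rewrite Ez epq.
apply/cut_IvE; exists p => //; split; last first.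
  by apply/mkseq_eqP => i im; rewrite Es // ltnW.
(* p d < q d would force code p < code q <= z = code p. *)
exists d; split => //; case: (ltngtP (q d) (p d)) => // [h|/esym/Nd//].
have dm : (m.+1 <= d)%N.
  by rewrite leqNgt; apply/negP => dm; apply: Nd; rewrite Es.
have := code_lt (leq_trans (ltn0Sn m) dm) (fun i hi => esym (Ed i hi)) h.
by rewrite -Ez ltNge z1.
Qed.

Lemma cut_Iv_open q m : sorgenfrey_open (Defs.cut Iv q m `|` [set code q]).
Proof.
move=> x [Hx|->]; last first.
  exists (branch_hi q m); split; first exact: code_lt_branch_hi.
  move=> z Hz; case: (pselect (z = code q)) => [->|nz]; [by right | left].
  exact: cut_Iv_intv.
(* x = code p with p branching right of q at depth d >= m; the whole
   interval [code p, branch_hi p d) consists of such points. *)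
have [p [[d [E1 E2]] /mkseq_eqP E3] ->] := (cut_IvE q m x).1 Hx.
have dm := prefix_depth (iffRL (mkseq_eqP _ _ _) E3) E2.
exists (branch_hi p d); split; first exact: code_lt_branch_hi.
move=> z /andP[z1 z2]; left.
have Iz : Iv (mkseq p d.+1) z.
  by rewrite Iv_branchE z2 andbT; exact: le_trans (code_ge p d) z1.
have [p' Hp'] := branch_exists Iv_root Iv_cov_eq z.
have /mkseq_eqP Es := prefix_unique Iv_cov_eq Iv_disj (Hp' d.+1) Iz.
apply/cut_IvE; exists p'; last exact: fruit_Iv_eq.
split; first by exists d; split; [move=> i id; rewrite E1 // Es // ltnW | rewrite Es].
apply/mkseq_eqP => i im; rewrite E3 // Es //; exact: leq_trans im (leq_trans dm _).
Qed.

Lemma branch_hi_close q e : 0 < e -> exists m, branch_hi q m <= code q + e.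
Proof.
move=> e0; have [k Hk] := ltr_add_invr e0; rewrite add0r in Hk.
exists k; have := branch_len q k; have := code_ge q k.
set t := (k.+1%:R^-1 : R) in Hk *; clearbody t; lra.
Qed.

Lemma sorgenfrey_cut_base q (B : set R) : sorgenfrey_open B -> B (code q) ->
  exists m, Defs.cut Iv q m `|` [set code q] `<=` B.
Proof.
move=> oB Bq; have [y [qy yB]] := oB _ Bq.
have [m Hm] : exists m, branch_hi q m <= y.
  have [|m] := @branch_hi_close q (y - code q); first by rewrite subr_gt0.
  by rewrite addrC subrK; exists m.
exists m.+1 => z [/cut_Iv_sub/andP[z1 z2]|->]; apply: yB; apply/andP.
- by split; [exact: ltW | exact: lt_le_trans Hm].
- by split.
Qed.
End RealScheme.

Section Bijection.
Variables (T U : Type) (f : T -> U).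
Hypothesis f_bij : bijective f.

Lemma bij_image_preimage (B : set U) : f @` (f @^-1` B) = B.
Proof.
apply: image_preimage; apply/seteqP; split => // y _.
by have [g _ gK] := f_bij; exists (g y).
Qed.

Lemma bij_preimage_image (A : set T) : f @^-1` (f @` A) = A.
Proof.
apply/seteqP; split; last exact: preimage_image.
by move=> x [x' Ax' /(bij_inj f_bij) <-].
Qed.
End Bijection.

(* Schemes on X obtained by pulling back [Iv] along a bijection f : X -> R.
   Such a scheme is a Sorgenfrey base exactly when f is a homeomorphism onto
   the Sorgenfrey line. *)
Section Pullback.
Variables (R : realType) (X : topologicalType) (f : X -> R).
Hypothesis f_bij : bijective f.

Definition pullback : seq nat -> set X := fun a => f @^-1` Iv a.

Lemma fruit_pullback p : fruit pullback p = f @^-1` [set code p].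
Proof. by rewrite -fruit_Iv. Qed.

Lemma nbhd_pullback q m x : f x = code q ->
  Defs.cut pullback q m `|` [set x] = f @^-1` (Defs.cut Iv q m `|` [set code q]).
Proof.
move=> fx; rewrite preimage_setU /Defs.cut preimage_bigcup; congr (_ `|` _).
apply/seteqP; split => y /= E; first by rewrite E fx.
by apply: (bij_inj f_bij); rewrite E fx.
Qed.

Lemma open_pullback (B : set R) :
  (forall A : set X, open A <-> sorgenfrey_open (f @` A)) ->
  open (f @^-1` B) <-> sorgenfrey_open B.
Proof. by move=> hom; rewrite hom bij_image_preimage. Qed.

Lemma BB_pullback q x :
  (forall A : set X, open A <-> sorgenfrey_open (f @` A)) ->
  f x = code q -> BB pullback x q.
Proof.
move=> hom fx; split; [|split].
- by rewrite /branches /= fruit_pullback.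
- by move=> m; rewrite nbhd_pullback // open_pullback //; exact: cut_Iv_open.
- move=> U /hom oU Ux; have [|m Hm] := sorgenfrey_cut_base (q := q) oU.
    by rewrite -fx; exists x.
  exists m; rewrite nbhd_pullback // -(bij_preimage_image f_bij U).
  exact: preimage_subset.
Qed.

Lemma homeo_of_BB : (forall x, exists q, BB pullback x q) ->
  forall A : set X, open A <-> sorgenfrey_open (f @` A).
Proof.
move=> HB A; split.
- move=> oA _ [x Ax <-].
  have [q [qx [_ base]]] := HB x.
  have fx : f x = code q by move: qx; rewrite /branches /= fruit_pullback.
  have [m Hm] := base A oA Ax.
  have [y [xy Ny]] := cut_Iv_open (q := q) (m := m) (or_intror fx).
  exists y; split => // z /Ny.
  rewrite -(bij_image_preimage f_bij (_ `|` _)) -(nbhd_pullback m fx).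
  by case=> w /Hm Aw <-; exists w.
- rewrite openE => sA x Ax.
  have [q [qx [Nopen _]]] := HB x.
  have fx : f x = code q by move: qx; rewrite /branches /= fruit_pullback.
  have [m Hm] := sorgenfrey_cut_base (q := q) sA (ex_intro2 _ _ x Ax fx).
  apply: (filterS _ (open_nbhs_nbhs (conj (Nopen m) (or_intror erefl)))).
  by rewrite nbhd_pullback // -(bij_preimage_image f_bij A); apply: preimage_subset.
Qed.
End Pullback.

Lemma sorgenfrey_base_of_homeo (R : realType) (X : topologicalType) :
  homeomorphic_to_sorgenfrey R X ->
  exists V : seq nat -> set X,
    sorgenfrey_base V /\ locally_strict V /\ strict_branches V.
Proof.
move=> [f [f_bij hom]]; have [g fK gK] := f_bij.
have V_cover a : pullback f a = \bigcup_(n in [set: nat]) pullback f (rcons a n).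
  by rewrite /pullback {1}Iv_cov_eq preimage_bigcup.
have V_disj a m k : m <> k -> pullback f (rcons a m) `&` pullback f (rcons a k) = set0.
  by move=> mk; rewrite /pullback -preimage_setI Iv_disj // preimage_set0.
have fruitE p : fruit (pullback f) p = [set g (code p)].
  rewrite fruit_pullback; apply/seteqP; split => x /= E.
  - by rewrite -E fK.
  - by rewrite E gK.
have BB_code q : BB (pullback f) (g (code q)) q by apply: BB_pullback; rewrite ?gK.
exists (pullback f); split; [split|split] => //.
- by move=> a; apply/open_pullback => //; exact: Iv_sopen.
- by move=> p; exists (g (code p)); rewrite fruitE.
- move=> x q n; rewrite /branches /= fruitE /= => ->.
  by exists q; split.
- by move=> q; exists (g (code q)).
- by move=> p; exists (g (code p)).
Qed.

(* Conversely, a locally strict Sorgenfrey base with strict branches makes the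
   branch coding x |-> code (branch of x) a homeomorphism, because V is then
   the pullback of [Iv] along it. *)
Lemma homeo_of_sorgenfrey_base (R : realType) (X : topologicalType)
    (V : seq nat -> set X) :
  sorgenfrey_base V -> locally_strict V -> strict_branches V ->
  homeomorphic_to_sorgenfrey R X.
Proof.
move=> [_ _ [V_root V_cover] base_branch _] [_ V_disj] V_strict.
have [br [Hbr br_bij]] := branch_coding V_root V_cover V_disj V_strict.
pose f : X -> R := code \o br.
have f_bij : bijective f by apply: bij_comp br_bij; exact: code_bij.
have V_pullback : V = pullback f.
  apply/funext => a; apply/funext => x; apply/propext.
  have code_br : fruit Iv (br x) (f x) by rewrite fruit_Iv.
  rewrite /pullback /= (scheme_memberE V_cover V_disj _ (Hbr x)).
  by rewrite (scheme_memberE Iv_cov_eq Iv_disj _ code_br).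
exists f; split => //; apply: homeo_of_BB => // x; rewrite -V_pullback.
by have [t [Ht _]] := base_branch x (br x) 0%N (Hbr x); exists t.
Qed.

Theorem mainTheorem10 (R : realType) (X : topologicalType) :
  hausdorff_space X ->
  ((exists V : seq nat -> set X,
      sorgenfrey_base V /\ locally_strict V /\ strict_branches V)
   <-> homeomorphic_to_sorgenfrey R X).
Proof.
move=> _; split; last exact: sorgenfrey_base_of_homeo.
move=> [V [base [strict branches]]].
exact: homeo_of_sorgenfrey_base base strict branches.
Qed.
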